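(* Let $\mathcal{X}$ be a finite source alphabet and $\mathcal{Y}$ a finite reproduction alphabet with $|\mathcal{X}|\geq 2$ and $|\mathcal{Y}|\geq 2$, and let $d:\mathcal{X}\times\mathcal{Y}\to\mathbb{R}_{\geq0}$ be a normal distortion measure. Assume there exists at least one source distribution $P_X$ on $\mathcal{X}$ such that the rate distortion function $R(D)$ is not identically zero. Then there exist two distinct source letters $k_1,k_2\in\mathcal{X}$ and two distinct reproduction letters $l_1,l_2\in\mathcal{Y}$ such that $d(k_1,l_1)=0$, $d(k_1,l_2)>0$, $d(k_2,l_2)=0$ and $d(k_2,l_1)>0$.
   Context: A distortion measure $d:\mathcal{X}\times\mathcal{Y}\to\mathbb{R}_{\geq 0}$ is normal if for every $x\in\mathcal{X}$ there is $y\in\mathcal{Y}$ with $d(x,y)=0$. For a source distribution $P_X$ and distortion level $D\geq 0$, the rate distortion function is $R(D)=\inf\{I(X;Y): P_{Y|X},\ \sum_{x,y}P_X(x)P_{Y|X}(y|x)d(x,y)\leq D\}$, the infimum over all transition matrices $P_{Y|X}$, with $I(X;Y)$ the mutual information of $P_XP_{Y|X}$. *)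

From mathcomp Require Import all_boot all_order all_algebra.
From mathcomp Require Import classical_sets reals exp.
Set Implicit Arguments. Unset Strict Implicit. Unset Printing Implicit Defensive.
Import Order.TTheory GRing.Theory Num.Theory.
Local Open Scope ring_scope.
Local Open Scope classical_set_scope.

Section RD.
Context {R : realType} {X Y : finType}.

Definition is_dist (P : X -> R) : Prop :=
  (forall x, 0 <= P x) /\ \sum_(x : X) P x = 1.

Definition is_channel (W : X -> Y -> R) : Prop :=
  (forall x y, 0 <= W x y) /\ (forall x, \sum_(y : Y) W x y = 1).

Definition out_dist (P : X -> R) (W : X -> Y -> R) (y : Y) : R :=
  \sum_(x : X) P x * W x y.

Definition mutual_info (P : X -> R) (W : X -> Y -> R) : R :=
  \sum_(x : X) \sum_(y : Y)
    (if P x * W x y == 0 then 0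
     else P x * W x y * ln (W x y / out_dist P W y)).

Definition exp_distortion (P : X -> R) (W : X -> Y -> R) (d : X -> Y -> R) : R :=
  \sum_(x : X) \sum_(y : Y) P x * W x y * d x y.

Definition rate_distortion (P : X -> R) (d : X -> Y -> R) (D : R) : R :=
  inf [set mutual_info P W | W in [set W | is_channel W /\ exp_distortion P W d <= D]].

Definition normal_distortion (d : X -> Y -> R) : Prop :=
  (forall x y, 0 <= d x y) /\ (forall x, exists y, d x y = 0).

End RD.

From mathcomp Require Import all_boot all_order all_algebra.
From mathcomp Require Import boolp classical_sets reals exp.
Import Order.TTheory GRing.Theory Num.Theory.
Local Open Scope ring_scope.

(* If no two letters have "crossing" zero sets, the zero sets of the rows of
   [d] are totally ordered by inclusion, so the smallest one is contained in
   all of them: some reproduction letter [y0] has [d x y0 = 0] for every [x].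
   The deterministic channel onto [y0] then has zero distortion and zero
   mutual information, and since mutual information is nonnegative (Gibbs'
   inequality) [R(D) = 0] for every [D >= 0]. *)

Section LogInequality.
Context {R : realType}.

Lemma ln_le_subr1 {t : R} : 0 < t -> ln t <= t - 1.
Proof.
move=> t0; have := @le_ln1Dx _ (t - 1).
by rewrite ltrBrDl subrr addrC subrK; apply.
Qed.

Lemma subr_le_mul_ln (a b : R) : 0 < a -> 0 < b -> a - b <= a * ln (a / b).
Proof.
move=> a0 b0; rewrite -invf_div lnV ?posrE ?divr_gt0 // mulrN lerNr opprB.
have := ln_le_subr1 (divr_gt0 b0 a0) => /(ler_wpM2l (ltW a0))/le_trans; apply.
by rewrite mulrBr mulr1 mulrCA divff ?gt_eqF // mulr1.
Qed.

End LogInequality.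

Section MutualInfoNonneg.
Context {R : realType} {X Y : finType}.
Variables (P : X -> R) (W : X -> Y -> R).
Hypotheses (hP : is_dist P) (hW : is_channel W).

Lemma out_dist_ge x y : P x * W x y <= out_dist P W y.
Proof.
rewrite /out_dist (bigD1 x) //= lerDl sumr_ge0 // => x' _.
by rewrite mulr_ge0 //; [apply: hP.1 | apply: hW.1].
Qed.

Lemma sum_out_dist : \sum_y out_dist P W y = 1.
Proof.
rewrite /out_dist exchange_big /= -hP.2; apply: eq_bigr => x _.
by rewrite -mulr_sumr hW.2 mulr1.
Qed.

Lemma mutual_info_summand_ge x y :
  P x * W x y - P x * out_dist P W y <=
  (if P x * W x y == 0 then 0
   else P x * W x y * ln (W x y / out_dist P W y)).
Proof.
have Px0 := hP.1 x; have Wxy0 := hW.1 x y.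
have [PW0|PWn0] := eqVneq (P x * W x y) 0.
  by rewrite PW0 sub0r oppr_le0 mulr_ge0 // (le_trans _ (out_dist_ge x y)) ?PW0.
have PW_gt0 : 0 < P x * W x y by rewrite lt_def PWn0 mulr_ge0.
have Px_gt0 : 0 < P x by rewrite lt_def Px0 andbT; apply: contraNneq PWn0 => ->; rewrite mul0r.
have q_gt0 : 0 < out_dist P W y := lt_le_trans PW_gt0 (out_dist_ge x y).
have -> : W x y / out_dist P W y = P x * W x y / (P x * out_dist P W y).
  by rewrite invfM mulrACA divff ?gt_eqF // mul1r.
exact: subr_le_mul_ln (mulr_gt0 Px_gt0 q_gt0).
Qed.

Lemma mutual_info_ge0 : 0 <= mutual_info P W.
Proof.
(* For each [x] the lower bounds sum to [P x * (1 - 1) = 0]. *)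
apply: sumr_ge0 => x _.
apply: le_trans (ler_sum _ (fun y _ => mutual_info_summand_ge x y)).
by rewrite sumrB -!mulr_sumr hW.2 sum_out_dist subrr.
Qed.

End MutualInfoNonneg.

Section ConstChannel.
Context {R : realType} {X Y : finType}.
Variable y0 : Y.

Definition const_channel : X -> Y -> R := fun _ y => (y == y0)%:R.

Lemma const_channel_is_channel : is_channel const_channel.
Proof.
split=> [x y|x]; first by rewrite ler0n.
by rewrite /const_channel (bigD1 y0) //= eqxx big1 ?addr0 // => y /negbTE ->.
Qed.

Lemma mutual_info_const_channel (P : X -> R) :
  is_dist P -> mutual_info P const_channel = 0.
Proof.
move=> hP; rewrite /mutual_info big1 // => x _; rewrite big1 // => y _.
rewrite /const_channel; have [->|_] := eqVneq y y0; last by rewrite mulr0 eqxx.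
rewrite /out_dist; under eq_bigr do rewrite eqxx mulr1.
by rewrite hP.2 divr1 ln1 mulr0 if_same.
Qed.

Lemma exp_distortion_const_channel (P : X -> R) (d : X -> Y -> R) :
  exp_distortion P const_channel d = \sum_x P x * d x y0.
Proof.
apply: eq_bigr => x _; rewrite (bigD1 y0) //= big1 ?addr0 => [|y /negbTE y_ne].
  by rewrite /const_channel eqxx mulr1.
by rewrite /const_channel y_ne mulr0 mul0r.
Qed.

End ConstChannel.

Lemma rate_distortion_eq0 {R : realType} {X Y : finType} {P : X -> R}
    {d : X -> Y -> R} {D : R} {W : X -> Y -> R} :
  is_dist P -> is_channel W -> exp_distortion P W d <= D ->
  mutual_info P W = 0 -> rate_distortion P d D = 0.
Proof.
move=> hP hW WD W0; rewrite /rate_distortion; set S := (E in inf E).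
have S0 : S 0 by exists W.
have lb0 : lbound S 0 by move=> _ [V [hV _] <-]; exact: mutual_info_ge0.
by apply/le_anti; rewrite (ge_inf (ex_intro _ 0 lb0)) // lb_le_inf //; exists 0.
Qed.

Lemma chain_common_member (I T : finType) (Z : I -> {set T}) (i0 : I) :
  (forall i, exists t, t \in Z i) ->
  (forall i j, (Z i \subset Z j) || (Z j \subset Z i)) ->
  exists t, forall i, t \in Z i.
Proof.
move=> Z_inhabited Zchain.
have [i1 _ i1_min] := @arg_minnP I i0 xpredT (fun i => #|Z i|) isT.
have [t t_in] := Z_inhabited i1.
exists t => j; suff : Z i1 \subset Z j by move/fintype.subsetP; apply.
have /orP [//|Zji] := Zchain i1 j.
suff -> : Z i1 = Z j by [].
by apply/eqP; rewrite eq_sym eqEcard Zji i1_min.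
Qed.

Section ZeroSets.
Context {R : realType} {X Y : finType}.
Variable d : X -> Y -> R.

Definition zero_set x : {set Y} := [set y | d x y == 0].

Definition crossing_zeros : Prop :=
  exists (k1 k2 : X) (l1 l2 : Y),
    k1 != k2 /\ l1 != l2 /\
    d k1 l1 = 0 /\ 0 < d k1 l2 /\ d k2 l2 = 0 /\ 0 < d k2 l1.

Lemma crossing_zeros_of_incomparable k1 k2 :
  (forall x y, 0 <= d x y) ->
  ~~ (zero_set k1 \subset zero_set k2) -> ~~ (zero_set k2 \subset zero_set k1) ->
  crossing_zeros.
Proof.
move=> d_ge0 /subsetPn [l1 l1_in1 l1_out2] /subsetPn [l2 l2_in2 l2_out1].
rewrite !inE in l1_in1 l1_out2 l2_in2 l2_out1.
exists k1, k2, l1, l2; split; first by apply: contraNneq l1_out2 => <-.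
split; first by apply: contraNneq l1_out2 => ->.
by rewrite !lt_def l2_out1 l1_out2 !d_ge0 (eqP l1_in1) (eqP l2_in2).
Qed.

Lemma common_zero_of_no_crossing (x0 : X) :
  normal_distortion d -> ~ crossing_zeros -> exists y0, forall x, d x y0 = 0.
Proof.
move=> [d_ge0 d_normal] no_cross.
have [|i j|y0 y0_in] := @chain_common_member _ _ zero_set x0.
- by move=> x; have [y dxy] := d_normal x; exists y; rewrite inE dxy.
- apply: contra_notP no_cross => /negP/norP [ij ji].
  exact: crossing_zeros_of_incomparable d_ge0 ij ji.
- by exists y0 => x; have := y0_in x; rewrite inE => /eqP.
Qed.

End ZeroSets.

Theorem mainTheorem8 (R : realType) (X Y : finType)
  (hX : (2 <= #|X|)%N) (hY : (2 <= #|Y|)%N)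
  (d : X -> Y -> R) (hd : normal_distortion d)
  (hRD : exists P : X -> R, is_dist P /\
           ~ (forall D : R, 0 <= D -> rate_distortion P d D = 0)) :
  exists (k1 k2 : X) (l1 l2 : Y),
    k1 != k2 /\ l1 != l2 /\
    d k1 l1 = 0 /\ 0 < d k1 l2 /\ d k2 l2 = 0 /\ 0 < d k2 l1.
Proof.
have [x0 _] := card_gt0P (ltnW hX).
have [P [hP RD_nonzero]] := hRD.
apply: (contra_notP _ RD_nonzero) => no_cross D D_ge0.
have [y0 y0_zero] := common_zero_of_no_crossing d x0 hd no_cross.
apply: (rate_distortion_eq0 hP (const_channel_is_channel y0)).
  by rewrite exp_distortion_const_channel big1 => // x _; rewrite y0_zero mulr0.
exact: mutual_info_const_channel.
Qed.
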